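(* For integer exponents $j$ of powers $w^j$ of factors $w$ occurring in a 3iet word $u_{\varepsilon,\ell}$ we have $$ j\leq 2+ \sup_{n\in\mathbb N} a_n\,, $$ where $\varepsilon=[0,a_1,a_2,\dots]$ is the continued fraction expansion of $\varepsilon$.
   Context: Parameters $\varepsilon,\ell$ satisfy $\varepsilon\in(0,1)\setminus\mathbb Q$ and $\max\{\varepsilon,1-\varepsilon\}<\ell<1$. The three interval exchange $T_{\varepsilon,\ell}:[0,\ell)\to[0,\ell)$ is defined by $T_{\varepsilon,\ell}(x)=x+1-\varepsilon$ for $x\in I_A:=[0,\ell-1+\varepsilon)$, $T_{\varepsilon,\ell}(x)=x+1-2\varepsilon$ for $x\in I_B:=[\ell-1+\varepsilon,\varepsilon)$, and $T_{\varepsilon,\ell}(x)=x-\varepsilon$ for $x\in I_C:=[\varepsilon,\ell)$. A 3iet word $u_{\varepsilon,\ell}$ with parameters $\varepsilon,\ell$ is the word $(u_n)_{n\in\mathbb N}$ over $\{A,B,C\}$ with $u_n=X$ iff $T_{\varepsilon,\ell}^n(x_0)\in I_X$, for some $x_0\in[0,\ell)$. For an integer $j$, $w^j$ denotes the concatenation of $j$ copies of $w$. *)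

From Stdlib Require Import Reals ZArith Arith List.
Open Scope R_scope.

Inductive letter := LA | LB | LC.

Definition T3 (eps l x : R) : R :=
  if Rlt_dec x (l - 1 + eps) then x + 1 - eps
  else if Rlt_dec x eps then x + 1 - 2 * eps
  else x - eps.

Definition code3 (eps l x : R) : letter :=
  if Rlt_dec x (l - 1 + eps) then LA
  else if Rlt_dec x eps then LB
  else LC.

Definition u3iet (eps l x0 : R) (n : nat) : letter :=
  code3 eps l (Nat.iter n (T3 eps l) x0).

Definition irrational (x : R) : Prop :=
  ~ exists p q : Z, q <> 0%Z /\ x = IZR p / IZR q.

Definition floorR (x : R) : Z := (up x - 1)%Z.

Definition gauss (x : R) : R := / x - IZR (floorR (/ x)).

(* Partial quotients: eps = [0; a_1, a_2, ...], a_0 := 0,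
   a_{k+1} = floor(1 / G^k(eps)). *)
Definition cf_digit (eps : R) (n : nat) : Z :=
  match n with
  | O => 0%Z
  | S k => floorR (/ Nat.iter k gauss eps)
  end.

Definition power_occurs (u : nat -> letter) (w : list letter) (j : nat) : Prop :=
  exists i : nat, forall k : nat, (k < j * length w)%nat ->
    u (i + k)%nat = nth (k mod length w) w LA.

From Stdlib Require Import Reals ZArith Arith List Lra Lia Psatz.
Open Scope R_scope.

(* [T_(eps,l)] is induced by the rotation [x |-> x - eps (mod 1)], each letter
   costing one or two rotation steps.  If [w^j] occurs at [x], then [x] and its
   [(j-1)|w|]-th iterate [x + E] share the coding along [w], so the [m + 1]
   rotation points [x - s eps (mod 1)], [s <= m], avoid an arc of length
   [|E| = (j-1) |m eps - k|], where [m] counts the rotation steps along [w].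
   Take [q_K <= m + 1 < q_(K+1)].  The return times [q_(K-1)] and [q_K - q_(K-1)]
   move the rotation in opposite directions by at most [theta_(K-1) + theta_K],
   [theta_n = |q_n eps - p_n|], which therefore bounds every gap; this is
   [(a_(K+1) + 1) theta_K + theta_(K+1) < (a_(K+1) + 2) theta_K].  Best
   approximation gives [theta_K <= |m eps - k|], whence [j - 1 < a_(K+1) + 2]. *)

Lemma floorR_spec x : IZR (floorR x) <= x < IZR (floorR x) + 1.
Proof.
  unfold floorR. rewrite minus_IZR. destruct (archimed x).
  change (IZR 1) with 1. lra.
Qed.

Lemma irrational_gauss b : 0 < b -> irrational b -> irrational (gauss b).
Proof.
  intros Hb Hirr [p [q [Hq Hpq]]]. apply Hirr. unfold gauss in Hpq.
  set (f := floorR (/ b)) in *.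
  assert (Hq' : IZR q <> 0) by (apply not_0_IZR; exact Hq).
  assert (Hinv : / b = IZR (f * q + p) / IZR q).
  { rewrite plus_IZR, mult_IZR. replace (/ b) with (IZR f + IZR p / IZR q) by lra.
    field. exact Hq'. }
  assert (Hnum : (f * q + p)%Z <> 0%Z).
  { intro H0. rewrite H0 in Hinv. pose proof (Rinv_0_lt_compat b Hb).
    unfold Rdiv in Hinv. rewrite Rmult_0_l in Hinv. lra. }
  exists q, (f * q + p)%Z. split; [exact Hnum|].
  rewrite <- (Rinv_inv b), Hinv. field. split; [apply not_0_IZR, Hnum | exact Hq'].
Qed.

Lemma irrational_combination_neq0 al (m n : Z) :
  irrational al -> m <> 0%Z -> IZR m * al - IZR n <> 0.
Proof.
  intros Hirr Hm H0. apply Hirr. exists n, m. split; [exact Hm|].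
  assert (IZR m <> 0) by (apply not_0_IZR, Hm). field_simplify_eq; [lra | assumption].
Qed.

Lemma Rabs_le_add_same_sign x y : 0 <= x * y -> Rabs x <= Rabs (x + y).
Proof.
  intros. unfold Rabs. destruct (Rcase_abs x), (Rcase_abs (x + y)); nra.
Qed.

Lemma unimodular_coords (P Q P' Q' m n : Z) :
  ((P' * Q - P * Q') * (P' * Q - P * Q') = 1)%Z ->
  exists u v : Z, m = (u * Q + v * Q')%Z /\ n = (u * P + v * P')%Z.
Proof.
  set (e := (P' * Q - P * Q')%Z). intros He.
  exists (e * (m * P' - n * Q'))%Z, (e * (n * Q - m * P))%Z. split.
  - transitivity (m * (e * e))%Z; [rewrite He; ring | unfold e; ring].
  - transitivity (n * (e * e))%Z; [rewrite He; ring | unfold e; ring].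
Qed.

(* The points [y - s al (mod 1)], [0 <= s <= m], avoid an arc of length [D]. *)
Definition orbit_in_arc (al y c D : R) (m : Z) : Prop :=
  forall s, (0 <= s <= m)%Z -> exists k : Z, c <= y - IZR s * al + IZR k <= c + 1 - D.

Lemma window_in_arc z E : 0 <= z < 1 -> 0 <= z + E < 1 ->
  Rmax 0 (- E) <= z <= Rmax 0 (- E) + 1 - Rabs E.
Proof.
  intros. unfold Rmax, Rabs. destruct (Rle_dec 0 (- E)), (Rcase_abs E); lra.
Qed.

Section RotationOrbit.

Variables (al y : R) (q1 q2 p1 p2 : Z).
Hypotheses (Hq1 : (0 <= q1)%Z) (Hq2 : (0 <= q2)%Z).

Lemma rotation_step s k : (0 <= s < q1 + q2)%Z ->
  exists s' k', (0 <= s' < q1 + q2)%Z /\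
    (y - IZR s' * al + IZR k' = y - IZR s * al + IZR k - (IZR q1 * al - IZR p1) \/
     y - IZR s' * al + IZR k' = y - IZR s * al + IZR k + (IZR q2 * al - IZR p2)).
Proof.
  intros Hs. destruct (Z_lt_le_dec s q2).
  - exists (s + q1)%Z, (k + p1)%Z. split; [lia|]. left. rewrite !plus_IZR. ring.
  - exists (s - q2)%Z, (k - p2)%Z. split; [lia|]. right. rewrite !minus_IZR. ring.
Qed.

Lemma rotation_hits_interval a B : (1 <= q1 + q2)%Z ->
  IZR q1 * al - IZR p1 < 0 -> 0 < IZR q2 * al - IZR p2 ->
  - (IZR q1 * al - IZR p1) <= B -> IZR q2 * al - IZR p2 <= B ->
  exists s k, (0 <= s < q1 + q2)%Z /\ a < y - IZR s * al + IZR k <= a + B.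
Proof.
  intros Hq Hv1 Hv2 HB1 HB2.
  pose proof (Rmin_l (- (IZR q1 * al - IZR p1)) (IZR q2 * al - IZR p2)).
  pose proof (Rmin_r (- (IZR q1 * al - IZR p1)) (IZR q2 * al - IZR p2)).
  set (mu := Rmin (- (IZR q1 * al - IZR p1)) (IZR q2 * al - IZR p2)) in *.
  assert (Hmu : 0 < mu) by (apply Rmin_glb_lt; lra).
  set (k0 := floorR (a - y)). pose proof (floorR_spec (a - y)) as Hk0. fold k0 in Hk0.
  (* Walk upwards by steps in [[mu, B]] until [a] is passed. *)
  assert (Hwalk : forall N : nat, exists s k, (0 <= s < q1 + q2)%Z /\
    (a < y - IZR s * al + IZR k <= a + B \/
     y + IZR k0 + INR N * mu <= y - IZR s * al + IZR k <= a)).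
  { induction N as [|N (s & k & Hs & [Hin | Hbelow])].
    - exists 0%Z, k0. split; [lia|]. right. simpl. lra.
    - exists s, k. auto.
    - destruct (rotation_step s k Hs) as (s' & k' & Hs' & Hstep).
      exists s', k'. split; [exact Hs'|]. rewrite S_INR.
      destruct (Rle_lt_dec (y - IZR s' * al + IZR k') a); [right|left];
        destruct Hstep; lra. }
  destruct (archimed_cor1 mu Hmu) as (N & HN & HN0).
  assert (HNmu : 1 < INR N * mu).
  { apply lt_0_INR in HN0. apply (Rmult_lt_compat_l (INR N)) in HN; [|exact HN0].
    rewrite Rinv_r in HN; lra. }
  destruct (Hwalk N) as (s & k & Hs & [Hin | Hbelow]); [exists s, k; auto | lra].
Qed.

End RotationOrbit.

Lemma orbit_in_arc_gap_le al y c D B (m q1 q2 p1 p2 : Z) :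
  (0 <= q1)%Z -> (0 <= q2)%Z -> (1 <= q1 + q2 <= m + 1)%Z ->
  (IZR q1 * al - IZR p1) * (IZR q2 * al - IZR p2) < 0 ->
  Rabs (IZR q1 * al - IZR p1) <= B -> Rabs (IZR q2 * al - IZR p2) <= B ->
  orbit_in_arc al y c D m -> D <= B.
Proof.
  intros Hq1 Hq2 Hq Hsign HB1 HB2 Harc.
  destruct (Rle_or_lt D B) as [|HDB]; [assumption|exfalso].
  assert (Hhit : exists s k, (0 <= s < q1 + q2)%Z /\
    c + 1 - D < y - IZR s * al + IZR k <= c + 1 - D + B).
  { destruct (Rlt_or_le (IZR q1 * al - IZR p1) 0) as [Hv1|Hv1].
    - assert (Hv2 : 0 < IZR q2 * al - IZR p2) by nra.
      rewrite Rabs_left in HB1 by lra. rewrite Rabs_right in HB2 by lra.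
      apply (rotation_hits_interval al y q1 q2 p1 p2); lia || lra.
    - assert (Hv2 : IZR q2 * al - IZR p2 < 0) by nra.
      assert (0 < IZR q1 * al - IZR p1) by nra.
      rewrite Rabs_left in HB2 by lra. rewrite Rabs_right in HB1 by lra.
      destruct (rotation_hits_interval al y q2 q1 p2 p1 Hq2 Hq1 (c + 1 - D) B)
        as (s & k & Hs & Hpt); try lia; try lra.
      exists s, k. split; [lia | exact Hpt]. }
  destruct Hhit as (s & k & Hs & Hpt).
  destruct (Harc s ltac:(lia)) as [k' Hk'].
  assert (Hkk : 0 < IZR (k - k') < 1) by (rewrite minus_IZR; lra).
  destruct Hkk as [H0 H1]. apply lt_IZR in H0. apply lt_IZR in H1. lia.
Qed.

Section ContinuedFraction.

Variable eps : R.
Hypothesis Heps : 0 < eps < 1.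
Hypothesis Hirr : irrational eps.

Definition gauss_orbit (n : nat) : R := Nat.iter n gauss eps.

Lemma gauss_orbit_bounds n : 0 < gauss_orbit n < 1 /\ irrational (gauss_orbit n).
Proof.
  induction n as [|n [Hb Hbi]]; [exact (conj Heps Hirr)|].
  change (gauss_orbit (S n)) with (gauss (gauss_orbit n)).
  assert (Hg : irrational (gauss (gauss_orbit n))) by (apply irrational_gauss; [lra | exact Hbi]).
  split; [|exact Hg].
  assert (gauss (gauss_orbit n) <> 0).
  { intro H0. apply Hg. exists 0%Z, 1%Z. split; [lia|]. rewrite H0. simpl. field. }
  pose proof (floorR_spec (/ gauss_orbit n)). unfold gauss in *. lra.
Qed.

Lemma cf_digit_ge1 n : (1 <= cf_digit eps (S n))%Z.
Proof.
  change (cf_digit eps (S n)) with (floorR (/ gauss_orbit n)).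
  destruct (gauss_orbit_bounds n) as [Hb _].
  pose proof (floorR_spec (/ gauss_orbit n)).
  assert (1 < / gauss_orbit n) by (rewrite <- Rinv_1; apply Rinv_lt_contravar; lra).
  assert (Hpos : 0 < IZR (floorR (/ gauss_orbit n))) by lra.
  apply lt_0_IZR in Hpos. lia.
Qed.

Lemma gauss_orbit_succ n :
  gauss_orbit n * gauss_orbit (S n) = 1 - IZR (cf_digit eps (S n)) * gauss_orbit n.
Proof.
  change (gauss_orbit (S n)) with (gauss (gauss_orbit n)).
  change (cf_digit eps (S n)) with (floorR (/ gauss_orbit n)).
  destruct (gauss_orbit_bounds n) as [Hb _]. unfold gauss. field. lra.
Qed.

(* [cf_dist n = | q_(n-1) eps - p_(n-1) |] for the convergents [p_k / q_k] of [eps]. *)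
Fixpoint cf_dist (n : nat) : R :=
  match n with O => 1 | S k => cf_dist k * gauss_orbit k end.

Lemma cf_dist_pos n : 0 < cf_dist n.
Proof.
  induction n as [|n IH]; simpl; [lra|].
  destruct (gauss_orbit_bounds n) as [Hb _]. nra.
Qed.

Lemma cf_dist_lt n : cf_dist (S n) < cf_dist n.
Proof.
  simpl. pose proof (cf_dist_pos n). destruct (gauss_orbit_bounds n) as [Hb _]. nra.
Qed.

Lemma cf_dist_rec n :
  cf_dist n = IZR (cf_digit eps (S n)) * cf_dist (S n) + cf_dist (S (S n)).
Proof.
  cbn [cf_dist]. pose proof (gauss_orbit_succ n) as Hs.
  replace (cf_dist n * gauss_orbit n * gauss_orbit (S n))
    with (cf_dist n * (gauss_orbit n * gauss_orbit (S n))) by ring.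
  rewrite Hs. ring.
Qed.

(* The recurrence of the convergents, shifted by one: with [u0, u1] equal to
   [0, 1] (resp. [1, 0]) it yields [q_(n-1)] (resp. [p_(n-1)]). *)
Fixpoint cf_seq (u0 u1 : Z) (n : nat) : Z :=
  match n with
  | O => u0
  | S O => u1
  | S (S k as n') => (cf_digit eps n' * cf_seq u0 u1 n' + cf_seq u0 u1 k)%Z
  end.

Lemma cf_seq_rec u0 u1 n :
  cf_seq u0 u1 (S (S n)) = (cf_digit eps (S n) * cf_seq u0 u1 (S n) + cf_seq u0 u1 n)%Z.
Proof. reflexivity. Qed.

Definition cf_q := cf_seq 0 1.
Definition cf_p := cf_seq 1 0.
Definition cf_rem (n : nat) : R := IZR (cf_q n) * eps - IZR (cf_p n).

Lemma cf_rem_rec n :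
  cf_rem (S (S n)) = IZR (cf_digit eps (S n)) * cf_rem (S n) + cf_rem n.
Proof.
  unfold cf_rem, cf_q, cf_p. rewrite !cf_seq_rec, !plus_IZR, !mult_IZR. ring.
Qed.

Lemma cf_rem_closed n : cf_rem n = (-1) ^ S n * cf_dist n.
Proof.
  enough (H : cf_rem n = (-1) ^ S n * cf_dist n /\
              cf_rem (S n) = (-1) ^ S (S n) * cf_dist (S n)) by apply H.
  induction n as [|n [IH1 IH2]].
  - unfold cf_rem, cf_q, cf_p. simpl. split; ring.
  - split; [exact IH2|]. rewrite cf_rem_rec, IH1, IH2.
    replace (cf_dist (S (S n)))
      with (cf_dist n - IZR (cf_digit eps (S n)) * cf_dist (S n)) by (rewrite (cf_dist_rec n); ring).
    cbn [pow]. ring.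
Qed.

Lemma cf_rem_abs n : Rabs (cf_rem n) = cf_dist n.
Proof.
  rewrite cf_rem_closed, Rabs_mult, pow_1_abs, Rabs_pos_eq; [ring|].
  apply Rlt_le, cf_dist_pos.
Qed.

Lemma cf_rem_alternate n : cf_rem n * cf_rem (S n) < 0.
Proof.
  rewrite !cf_rem_closed.
  replace ((-1) ^ S n * cf_dist n * ((-1) ^ S (S n) * cf_dist (S n)))
    with (- (-1) ^ (2 * S n) * (cf_dist n * cf_dist (S n))) by
    (replace (2 * S n)%nat with (S n + S n)%nat by lia; rewrite pow_add; simpl; ring).
  rewrite pow_1_even. pose proof (cf_dist_pos n). pose proof (cf_dist_pos (S n)). nra.
Qed.

Lemma cf_det n : let d := (cf_p (S n) * cf_q n - cf_p n * cf_q (S n))%Z in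
  (d * d = 1)%Z.
Proof.
  cbv zeta. induction n as [|n IH]; [reflexivity|].
  unfold cf_p, cf_q in *. rewrite !cf_seq_rec. etransitivity; [|exact IH]. ring.
Qed.

Lemma cf_q_mono n : (0 <= cf_q n <= cf_q (S n) /\ 1 <= cf_q (S n))%Z.
Proof.
  induction n as [|n IH]; [cbv; intuition discriminate|].
  pose proof (cf_digit_ge1 n). unfold cf_q in *. rewrite cf_seq_rec. nia.
Qed.

Lemma cf_q_unbounded n : (Z.of_nat n <= cf_q (S n))%Z.
Proof.
  induction n as [|n IH]; [cbv; discriminate|].
  pose proof (cf_digit_ge1 n). pose proof (cf_q_mono (S n)).
  assert (Hqn : (n = 0)%nat \/ (1 <= cf_q n)%Z).
  { destruct n; [now left | right; apply cf_q_mono]. }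
  unfold cf_q in *. rewrite cf_seq_rec, Nat2Z.inj_succ.
  destruct Hqn as [-> | Hqn]; [cbn in *; lia | nia].
Qed.

Lemma cf_best_approx K (m n : Z) : (1 <= K)%nat -> (0 < m < cf_q (S K))%Z ->
  cf_dist K <= Rabs (IZR m * eps - IZR n).
Proof.
  intros HK Hm.
  destruct (unimodular_coords (cf_p K) (cf_q K) (cf_p (S K)) (cf_q (S K)) m n (cf_det K))
    as (u & v & -> & ->).
  assert (Hsplit : IZR (u * cf_q K + v * cf_q (S K)) * eps - IZR (u * cf_p K + v * cf_p (S K))
                   = IZR u * cf_rem K + IZR v * cf_rem (S K)).
  { unfold cf_rem. rewrite !plus_IZR, !mult_IZR. ring. }
  rewrite Hsplit.
  assert (Huv : (1 <= Z.abs u /\ u * v <= 0)%Z).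
  { destruct K as [|K]; [lia|]. pose proof (cf_q_mono K). pose proof (cf_q_mono (S K)).
    destruct (Z.lt_trichotomy v 0) as [Hv | [Hv | Hv]]; [nia | subst v; nia | nia]. }
  destruct Huv as [Hu Huv]. apply IZR_le in Hu. apply IZR_le in Huv.
  rewrite abs_IZR, mult_IZR in *.
  eapply Rle_trans; [|apply Rabs_le_add_same_sign].
  - rewrite Rabs_mult, cf_rem_abs. pose proof (cf_dist_pos K). nra.
  - pose proof (cf_rem_alternate K).
    replace (IZR u * cf_rem K * (IZR v * cf_rem (S K)))
      with ((IZR u * IZR v) * (cf_rem K * cf_rem (S K))) by ring. nra.
Qed.

Lemma cf_q_bracket (m : Z) : (0 <= m)%Z ->
  exists K, (1 <= K)%nat /\ (cf_q K <= m + 1 < cf_q (S K))%Z.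
Proof.
  intros Hm.
  assert (Hscan : forall N, (exists K, (1 <= K)%nat /\ (cf_q K <= m + 1 < cf_q (S K))%Z)
                            \/ (cf_q (S N) <= m + 1)%Z).
  { induction N as [|N [Hfound | Hle]].
    - right. change (cf_q 1) with 1%Z. lia.
    - left. exact Hfound.
    - destruct (Z_lt_le_dec (m + 1) (cf_q (S (S N)))); [left; exists (S N) | right]; lia. }
  destruct (Hscan (Z.to_nat (m + 2))) as [Hfound | Hle]; [exact Hfound|].
  pose proof (cf_q_unbounded (Z.to_nat (m + 2))). lia.
Qed.

Lemma orbit_arc_length_bound (M : Z) : (forall n, (cf_digit eps n <= M)%Z) ->
  forall (m n : Z) (y c D : R), (1 <= m)%Z -> orbit_in_arc eps y c D m ->
  D < (IZR M + 2) * Rabs (IZR m * eps - IZR n).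
Proof.
  intros HM m n y c D Hm Harc.
  destruct (cf_q_bracket m ltac:(lia)) as ([|K] & HK1 & HK2); [lia|].
  pose proof (cf_q_mono K).
  (* The return times [q_(K-1)] and [q_K - q_(K-1)] have remainders of opposite signs. *)
  assert (Hv : IZR (cf_q (S K) - cf_q K) * eps - IZR (cf_p (S K) - cf_p K)
               = cf_rem (S K) - cf_rem K) by (unfold cf_rem; rewrite !minus_IZR; ring).
  pose proof (cf_rem_alternate K). pose proof (cf_dist_pos (S K)).
  assert (HD : D <= cf_dist K + cf_dist (S K)).
  { apply (orbit_in_arc_gap_le eps y c D _ m (cf_q K) (cf_q (S K) - cf_q K)
             (cf_p K) (cf_p (S K) - cf_p K)); try lia; try exact Harc;
      fold (cf_rem K); rewrite ?Hv.
    - pose proof (Rle_0_sqr (cf_rem K)). unfold Rsqr in *. nra.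
    - rewrite cf_rem_abs. lra.
    - unfold Rminus. eapply Rle_trans; [apply Rabs_triang|].
      rewrite Rabs_Ropp, !cf_rem_abs. lra. }
  pose proof (cf_best_approx (S K) m n ltac:(lia) ltac:(lia)).
  pose proof (cf_dist_rec K). pose proof (cf_dist_lt (S K)).
  pose proof (IZR_le _ _ (HM (S K))). pose proof (IZR_le _ _ (cf_digit_ge1 K)).
  assert (IZR (cf_digit eps (S K)) * cf_dist (S K) <= IZR M * cf_dist (S K))
    by (apply Rmult_le_compat_r; lra).
  assert ((IZR M + 2) * cf_dist (S K) <= (IZR M + 2) * Rabs (IZR m * eps - IZR n))
    by (apply Rmult_le_compat_l; lra).
  lra.
Qed.

End ContinuedFraction.

Section IntervalExchange.

Variables eps l : R.
Hypotheses (Hl : Rmax eps (1 - eps) < l) (Hl1 : l < 1).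

Definition letter_shift (L : letter) : R :=
  match L with LA => 1 - eps | LB => 1 - 2 * eps | LC => - eps end.

Lemma T3_letter_shift x : T3 eps l x = x + letter_shift (code3 eps l x).
Proof.
  unfold T3, code3, letter_shift.
  destruct (Rlt_dec _ _); [ring|]. destruct (Rlt_dec _ _); ring.
Qed.

Lemma code3_LB x : code3 eps l x = LB -> l - 1 + eps <= x < eps.
Proof.
  unfold code3. destruct (Rlt_dec _ _); [discriminate|].
  destruct (Rlt_dec _ _); [lra | discriminate].
Qed.

Lemma iter_T3_range n x : 0 <= x < l -> 0 <= Nat.iter n (T3 eps l) x < l.
Proof.
  pose proof (Rmax_l eps (1 - eps)). pose proof (Rmax_r eps (1 - eps)).
  intros Hx. induction n as [|n IH]; [exact Hx|].
  rewrite Nat.iter_succ. set (z := Nat.iter n (T3 eps l) x) in *. unfold T3.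
  destruct (Rlt_dec _ _); [lra|]. destruct (Rlt_dec _ _); lra.
Qed.

Lemma iter_T3_same_coding x x' N :
  (forall K, (K < N)%nat ->
     code3 eps l (Nat.iter K (T3 eps l) x') = code3 eps l (Nat.iter K (T3 eps l) x)) ->
  Nat.iter N (T3 eps l) x' - Nat.iter N (T3 eps l) x = x' - x.
Proof.
  induction N as [|N IH]; intros Hcode; [reflexivity|].
  rewrite !Nat.iter_succ, !T3_letter_shift, (Hcode N) by lia.
  rewrite <- IH by (intros; apply Hcode; lia). ring.
Qed.

Definition rotation_window (x x' : R) (s : nat) : Prop :=
  exists k : Z, 0 <= x - INR s * eps + IZR k < 1 /\ 0 <= x' - INR s * eps + IZR k < 1.

Lemma same_coding_windows x x' p : 0 <= x < l -> 0 <= x' < l ->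
  (forall K, (K < p)%nat ->
     code3 eps l (Nat.iter K (T3 eps l) x') = code3 eps l (Nat.iter K (T3 eps l) x)) ->
  exists (m : nat) (k : Z), (p <= m)%nat /\
    Nat.iter p (T3 eps l) x = x - INR m * eps + IZR k /\
    forall s, (s <= m)%nat -> rotation_window x x' s.
Proof.
  intros Hx Hx'. induction p as [|p IH]; intros Hcode.
  - exists 0%nat, 0%Z. split; [lia|]. split; [simpl; ring|].
    intros s Hs. replace s with 0%nat by lia. exists 0%Z. simpl. lra.
  - destruct IH as (m & k & Hpm & Hz & Hwin); [intros; apply Hcode; lia|].
    pose proof (iter_T3_same_coding x x' p ltac:(intros; apply Hcode; lia)) as Hdiff.
    pose proof (iter_T3_range (S p) x Hx) as Hr. pose proof (iter_T3_range (S p) x' Hx') as Hr'.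
    pose proof (Hcode p ltac:(lia)) as Hc.
    pose proof (code3_LB (Nat.iter p (T3 eps l) x)) as HB.
    pose proof (code3_LB (Nat.iter p (T3 eps l) x')) as HB'.
    rewrite Hc in HB'. rewrite !Nat.iter_succ, !T3_letter_shift, Hc in *.
    destruct (code3 eps l (Nat.iter p (T3 eps l) x)); cbn [letter_shift] in *.
    + exists (S m), (k + 1)%Z. rewrite S_INR, plus_IZR.
      split; [lia|]. split; [lra|]. intros s Hs.
      destruct (Nat.eq_dec s (S m)) as [->|]; [|apply Hwin; lia].
      exists (k + 1)%Z. rewrite S_INR, plus_IZR. lra.
    + (* The intermediate rotation point [z + 1 - eps] of a [B] lies in [[l, 1)]. *)
      specialize (HB eq_refl). specialize (HB' eq_refl).
      exists (S (S m)), (k + 1)%Z. rewrite !S_INR, plus_IZR.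
      split; [lia|]. split; [lra|]. intros s Hs.
      destruct (Nat.eq_dec s (S (S m))) as [->|]; [|destruct (Nat.eq_dec s (S m)) as [->|]];
        [| |apply Hwin; lia]; exists (k + 1)%Z; rewrite ?S_INR, plus_IZR; lra.
    + exists (S m), k. rewrite S_INR.
      split; [lia|]. split; [lra|]. intros s Hs.
      destruct (Nat.eq_dec s (S m)) as [->|]; [|apply Hwin; lia].
      exists k. rewrite S_INR. lra.
Qed.

Lemma power_occurs_periodic_coding x0 w j : (0 < length w)%nat ->
  power_occurs (u3iet eps l x0) w (S j) ->
  exists i, forall r K, (r <= j)%nat -> (K < length w)%nat ->
    let x := Nat.iter i (T3 eps l) x0 in
    code3 eps l (Nat.iter K (T3 eps l) (Nat.iter (r * length w) (T3 eps l) x))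
    = code3 eps l (Nat.iter K (T3 eps l) x).
Proof.
  intros Hw [i Hi]. exists i. intros r K Hr HK x. unfold x. rewrite <- !Nat.iter_add.
  replace (K + r * length w + i)%nat with (i + (K + r * length w))%nat by lia.
  replace (K + i)%nat with (i + K)%nat by lia.
  unfold u3iet in Hi. rewrite !Hi by nia. rewrite Nat.Div0.mod_add. reflexivity.
Qed.

Lemma periodic_coding_translation x p j :
  (forall r K, (r <= j)%nat -> (K < p)%nat ->
     code3 eps l (Nat.iter K (T3 eps l) (Nat.iter (r * p) (T3 eps l) x))
     = code3 eps l (Nat.iter K (T3 eps l) x)) ->
  forall r, (r <= j)%nat ->
    Nat.iter (r * p) (T3 eps l) x = x + INR r * (Nat.iter p (T3 eps l) x - x).
Proof.
  intros Hcode r. induction r as [|r IH]; intros Hr; [simpl; ring|].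
  specialize (IH ltac:(lia)).
  pose proof (iter_T3_same_coding x _ p (fun K => Hcode r K ltac:(lia))) as Hshift.
  replace (S r * p)%nat with (p + r * p)%nat by lia. rewrite Nat.iter_add, S_INR. lra.
Qed.

Lemma power_orbit_in_arc x0 w j : 0 <= x0 < l -> (0 < length w)%nat ->
  power_occurs (u3iet eps l x0) w (S j) ->
  exists (y c : R) (m n : Z), (1 <= m)%Z /\
    orbit_in_arc eps y c (INR j * Rabs (IZR m * eps - IZR n)) m.
Proof.
  intros Hx0 Hw Hocc.
  destruct (power_occurs_periodic_coding x0 w j Hw Hocc) as [i Hcode]. cbv zeta in Hcode.
  set (p := length w) in *. set (x := Nat.iter i (T3 eps l) x0) in *.
  set (x' := Nat.iter (j * p) (T3 eps l) x).
  pose proof (iter_T3_range i x0 Hx0) as Hx. fold x in Hx.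
  pose proof (iter_T3_range (j * p) x Hx) as Hx'. fold x' in Hx'.
  destruct (same_coding_windows x x' p Hx Hx' (fun K => Hcode j K (le_n j)))
    as (m & k & Hpm & Hxp & Hwin).
  assert (Htrans : x' - x = INR j * (IZR k - INR m * eps)).
  { unfold x'. rewrite (periodic_coding_translation x p j Hcode j (le_n j)), Hxp. ring. }
  exists x, (Rmax 0 (- (x' - x))), (Z.of_nat m), k. split; [lia|].
  replace (INR j * Rabs (IZR (Z.of_nat m) * eps - IZR k)) with (Rabs (x' - x)).
  - intros s Hs. destruct (Hwin (Z.to_nat s) ltac:(lia)) as (k' & H1 & H2). exists k'.
    rewrite INR_IZR_INZ, Z2Nat.id in H1, H2 by lia.
    apply window_in_arc; lra.
  - rewrite Htrans, Rabs_mult, (Rabs_pos_eq (INR j)) by apply pos_INR.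
    rewrite <- INR_IZR_INZ, Rabs_minus_sym. reflexivity.
Qed.

End IntervalExchange.

Theorem corollary1 (eps l x0 : R)
  (Heps : 0 < eps < 1) (Hirr : irrational eps)
  (Hl : Rmax eps (1 - eps) < l) (Hl1 : l < 1)
  (Hx0 : 0 <= x0 < l)
  (w : list letter) (Hw : (0 < length w)%nat) (j : nat)
  (Hocc : power_occurs (u3iet eps l x0) w j)
  (M : Z) (HM : forall n : nat, (cf_digit eps n <= M)%Z) :
  (Z.of_nat j <= 2 + M)%Z.
Proof.
  pose proof (HM 0%nat) as HM0. simpl in HM0.
  destruct j as [|j]; [lia|].
  destruct (power_orbit_in_arc eps l Hl Hl1 x0 w j Hx0 Hw Hocc)
    as (y & c & m & n & Hm & Harc).
  pose proof (orbit_arc_length_bound eps Heps Hirr M HM m n y c _ Hm Harc) as Hbound.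
  assert (Hdist : 0 < Rabs (IZR m * eps - IZR n))
    by (apply Rabs_pos_lt, irrational_combination_neq0; [exact Hirr | lia]).
  assert (Hj : INR j < IZR (M + 2)).
  { rewrite plus_IZR. apply (Rmult_lt_reg_r _ _ _ Hdist). exact Hbound. }
  rewrite INR_IZR_INZ in Hj. apply lt_IZR in Hj. lia.
Qed.
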